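(* For $c>0$ define $$p_1(c)=1-2\Phi(c^{-1})-\sqrt{\tfrac{2}{\pi}}\,c\left(1-\exp\{-\tfrac{c^{-2}}{2}\}\right),$$ where $\Phi(s)=\Pr[X\ge s]$ for $X\sim N(0,1)$. Then for all $c>0$, $$p_1(c)=\sqrt{\tfrac{2}{\pi}}\sum_{k=0}^\infty\frac{(-1)^k}{2^kk!(2k+2)(2k+1)}\frac{1}{c^{2k+1}},$$ and for every $\delta\le\frac12$ and every $c\le\min\left\{\delta,\frac{1}{\sqrt{2\ln(1/\delta)}}\right\}$, $$e^{-\sqrt{\frac{2}{\pi}}(1+\delta)c}\le p_1(c)\le e^{-\sqrt{\frac2\pi}(1-\delta^3)c}.$$
   Context: $p_1(c)$ is the probability that two points at distance $cw$ collide under the Euclidean LSH $h(x)=\lceil (g^\top x+b)/w\rceil$ with $g\sim N(0,I_d)$, $b\sim U[0,w]$; the claim concerns only the explicit formula. *)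

From Stdlib Require Import Reals.
From Coquelicot Require Import Coquelicot.
Open Scope R_scope.

Definition std_normal_pdf (t : R) : R := exp (- t ^ 2 / 2) / sqrt (2 * PI).

Definition Phi (s : R) : R :=
  RInt_gen std_normal_pdf (at_point s) (Rbar_locally p_infty).

Definition p1 (c : R) : R :=
  1 - 2 * Phi (/ c) - sqrt (2 / PI) * c * (1 - exp (- (/ c ^ 2) / 2)).

Definition p1_term (c : R) (k : nat) : R :=
  sqrt (2 / PI) * ((-1) ^ k /
    (2 ^ k * INR (Stdlib.Arith.Factorial.fact k) * (2 * INR k + 2) * (2 * INR k + 1)))
  * / c ^ (2 * k + 1).

From Stdlib Require Import Reals Lra Psatz Factorial.
From Coquelicot Require Import Coquelicot.
Open Scope R_scope.

(* With G(x) = int_0^x exp(-t^2) dt, the function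
   x |-> int_0^1 exp(-x^2 (1 + t^2)) / (1 + t^2) dt + G(x)^2 has zero derivative,
   equals PI/4 at 0 and tends to G(+oo)^2, so G(+oo) = sqrt PI / 2 and
   Phi(s) = 1/2 - F(s) with F(s) the integral of the density over [0, s].
   Integrating the exponential series termwise writes F(s) as an entire power
   series in s; at s = 1/c the terms combine with those of
   exp(-1/(2c^2)) into the series of p_1(c).
   The Mills-ratio estimates phi(s)(1/s - 1/s^3) <= Phi(s) <= phi(s)/s give
   1 - a c <= p_1(c) <= 1 - a c + a exp(-1/(2c^2)) c^3 with a = sqrt(2/PI).
   The hypothesis on c gives exp(-1/(2c^2)) <= delta and c <= delta, and the
   two sides are compared with exponentials through 1 + x <= exp x and a cubic
   Taylor estimate. *)

(* Coquelicot states many equalities in the carrier of a normed module; exposing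
   [R] lets [ring] and [field] see them. *)
Ltac change_to_R := match goal with |- ?a = ?b => change (@eq R a b) end.

Lemma continuous_of_ex_derive (f : R -> R) x : ex_derive f x -> continuous f x.
Proof. apply (@ex_derive_continuous R_AbsRing R_NormedModule). Qed.

Lemma ex_RInt_continuous_R (f : R -> R) a b :
  (forall z, Rmin a b <= z <= Rmax a b -> continuous f z) -> ex_RInt f a b.
Proof. apply (@ex_RInt_continuous R_CompleteNormedModule). Qed.

Lemma exp_le_compat x y : x <= y -> exp x <= exp y.
Proof.
  intros Hxy; destruct (Req_dec x y) as [->|Hne]; [lra|].
  left; apply exp_increasing; lra.
Qed.

Lemma le_of_is_derive_nonneg (f df : R -> R) a b : a <= b ->
  (forall x, a <= x <= b -> is_derive f x (df x)) ->
  (forall x, a <= x <= b -> 0 <= df x) -> f a <= f b.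
Proof.
  intros Hab Hf Hdf.
  destruct (Req_dec a b) as [->|Hne]; [lra|].
  destruct (MVT_gen f a b df) as [c [Hc Hmvt]];
    rewrite ?Rmin_left, ?Rmax_right in * by lra.
  - intros x Hx; apply Hf; lra.
  - intros x Hx; apply continuity_pt_filterlim, continuous_of_ex_derive.
    eexists; apply Hf; lra.
  - assert (0 <= df c) by (apply Hdf; lra).
    assert (0 <= df c * (b - a)) by nra. lra.
Qed.

Lemma eq_of_is_derive_eq (f g df : R -> R) :
  (forall x, is_derive f x (df x)) -> (forall x, is_derive g x (df x)) ->
  f 0 = g 0 -> forall x, f x = g x.
Proof.
  intros Hf Hg H0 x.
  enough (Hdiff : f x - g x = f 0 - g 0) by lra.
  assert (Hd : forall y, is_derive (fun y => f y - g y) y 0).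
  { intros y; replace 0 with (df y - df y) by ring.
    apply (is_derive_minus f g); auto. }
  destruct (Rtotal_order 0 x) as [Hx|[<-|Hx]]; [symmetry| reflexivity |];
    apply (eq_is_derive (fun y => f y - g y)); auto.
Qed.

(** * The Gaussian integral *)

Definition gauss (t : R) : R := exp (- (t * t)).
Definition gauss_int (x : R) : R := RInt gauss 0 x.

Lemma continuous_gauss t : continuous gauss t.
Proof. apply continuous_of_ex_derive; unfold gauss; auto_derive; auto. Qed.

Lemma ex_RInt_gauss a b : ex_RInt gauss a b.
Proof. apply ex_RInt_continuous_R; intros; apply continuous_gauss. Qed.

Lemma is_derive_gauss_int x : is_derive gauss_int x (gauss x).
Proof.
  apply (is_derive_RInt gauss gauss_int 0 x).
  - apply filter_forall; intros b; apply (@RInt_correct R_CompleteNormedModule), ex_RInt_gauss.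
  - apply continuous_gauss.
Qed.

Lemma gauss_int_nonneg x : 0 <= x -> 0 <= gauss_int x.
Proof.
  intros Hx; apply RInt_ge_0; auto using ex_RInt_gauss.
  intros; left; apply exp_pos.
Qed.

Lemma ex_RInt_gauss_scale x : ex_RInt (fun t => gauss (x * t)) 0 1.
Proof.
  apply ex_RInt_continuous_R; intros.
  apply continuous_of_ex_derive; unfold gauss; auto_derive; auto.
Qed.

Lemma gauss_int_scale x : x * RInt (fun t => gauss (x * t)) 0 1 = gauss_int x.
Proof.
  unfold gauss_int.
  change (scal x (RInt (fun t => gauss (x * t)) 0 1) = RInt gauss 0 x).
  rewrite <- (RInt_scal (V := R_CompleteNormedModule)) by apply ex_RInt_gauss_scale.
  rewrite (RInt_ext _ (fun t => scal x (gauss (x * t + 0))))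
    by (intros; rewrite Rplus_0_r; reflexivity).
  rewrite (RInt_comp_lin (V := R_CompleteNormedModule)) by apply ex_RInt_gauss.
  f_equal; ring.
Qed.

Definition gauss_kernel (x t : R) : R := exp (- (x * x) * (1 + t * t)) / (1 + t * t).

Lemma continuous_gauss_kernel x t : continuous (gauss_kernel x) t.
Proof.
  apply continuous_of_ex_derive; unfold gauss_kernel; auto_derive; nra.
Qed.

Lemma ex_RInt_gauss_kernel x : ex_RInt (gauss_kernel x) 0 1.
Proof. apply ex_RInt_continuous_R; intros; apply continuous_gauss_kernel. Qed.

Lemma is_derive_gauss_kernel x t :
  is_derive (fun z => gauss_kernel z t) x (-2 * x * exp (- (x * x) * (1 + t * t))).
Proof. unfold gauss_kernel; auto_derive; [|field]; nra. Qed.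

Lemma continuity_2d_derive_gauss_kernel x t :
  continuity_2d_pt (fun u v => -2 * u * exp (- (u * u) * (1 + v * v))) x t.
Proof.
  apply continuity_2d_pt_mult.
  - apply continuity_2d_pt_mult; [apply continuity_2d_pt_const | apply continuity_2d_pt_id1].
  - apply (continuity_1d_2d_pt_comp exp (fun u v => - (u * u) * (1 + v * v))).
    + apply derivable_continuous_pt, derivable_pt_exp.
    + apply continuity_2d_pt_mult.
      * apply continuity_2d_pt_opp, continuity_2d_pt_mult; apply continuity_2d_pt_id1.
      * apply continuity_2d_pt_plus; [apply continuity_2d_pt_const|].
        apply continuity_2d_pt_mult; apply continuity_2d_pt_id2.
Qed.

Lemma is_derive_RInt_gauss_kernel x :
  is_derive (fun x => RInt (gauss_kernel x) 0 1) x (-2 * gauss x * gauss_int x).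
Proof.
  assert (Hder : forall y t, Derive (fun z => gauss_kernel z t) y
                             = -2 * y * exp (- (y * y) * (1 + t * t)))
    by (intros; apply is_derive_unique, is_derive_gauss_kernel).
  replace (-2 * gauss x * gauss_int x)
    with (RInt (fun t => Derive (fun z => gauss_kernel z t) x) 0 1).
  - apply is_derive_RInt_param.
    + apply filter_forall; intros y t _; eexists; apply is_derive_gauss_kernel.
    + intros t _; eapply continuity_2d_pt_ext;
        [|apply continuity_2d_derive_gauss_kernel].
      intros; rewrite Hder; reflexivity.
    + apply filter_forall; intros y; apply ex_RInt_gauss_kernel.
  - rewrite <- gauss_int_scale.
    rewrite (RInt_ext _ (fun t => (-2 * x * gauss x) * gauss (x * t))).
    + rewrite (RInt_scal (V := R_CompleteNormedModule)) by apply ex_RInt_gauss_scale.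
      change_to_R; unfold scal; simpl; unfold mult; simpl; ring.
    + intros t _; rewrite Hder; unfold gauss.
      rewrite (Rmult_assoc (-2 * x)), <- exp_plus; do 2 f_equal; ring.
Qed.

Lemma RInt_gauss_kernel_const x :
  RInt (gauss_kernel x) 0 1 + gauss_int x * gauss_int x = PI / 4.
Proof.
  revert x.
  apply (eq_of_is_derive_eq (fun x => RInt (gauss_kernel x) 0 1 + gauss_int x * gauss_int x)
           (fun _ => PI / 4)
           (fun y => -2 * gauss y * gauss_int y + (gauss y * gauss_int y + gauss_int y * gauss y))).
  - intros y.
    apply (is_derive_plus (fun x => RInt (gauss_kernel x) 0 1)).
    + apply is_derive_RInt_gauss_kernel.
    + apply (is_derive_mult gauss_int gauss_int); try apply is_derive_gauss_int.
      intros; change_to_R; apply Rmult_comm.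
  - intros y; replace (_ + _) with 0 by ring.
    apply (@is_derive_const R_AbsRing R_NormedModule).
  - unfold gauss_int; rewrite RInt_point, Rmult_0_l, Rplus_0_r.
    rewrite <- atan_1.
    replace (atan 1) with (atan 1 - atan 0) by (rewrite atan_0; ring).
    apply is_RInt_unique, (is_RInt_derive atan).
    + intros t _; replace (gauss_kernel 0 t) with (/ (1 + t²)); [apply is_derive_atan|].
      unfold gauss_kernel, Rsqr; rewrite Rmult_0_l, Ropp_0, Rmult_0_l, exp_0; field; nra.
    + intros; apply continuous_gauss_kernel.
Qed.

Lemma RInt_gauss_kernel_bounds x : 0 <= RInt (gauss_kernel x) 0 1 <= exp (- (x * x)).
Proof.
  assert (Hk : forall t, 0 <= gauss_kernel x t <= exp (- (x * x))).
  { intros t; unfold gauss_kernel.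
    assert (Hpos := exp_pos (- (x * x) * (1 + t * t))).
    assert (Hle : exp (- (x * x) * (1 + t * t)) <= exp (- (x * x)))
      by (apply exp_le_compat; nra).
    assert (Hinv : 0 < / (1 + t * t) <= 1).
    { split; [apply Rinv_0_lt_compat; nra|].
      rewrite <- Rinv_1; apply Rinv_le_contravar; nra. }
    unfold Rdiv; split; nra. }
  split.
  - apply RInt_ge_0; auto using ex_RInt_gauss_kernel; try lra.
    intros; apply Hk.
  - replace (exp (- (x * x))) with (RInt (fun _ => exp (- (x * x))) 0 1)
      by (rewrite RInt_const; change_to_R; unfold scal; simpl; unfold mult; simpl; ring).
    apply RInt_le; auto using ex_RInt_gauss_kernel, ex_RInt_const; try lra.
    intros; apply Hk.
Qed.

Lemma is_lim_exp_neg_sqr : is_lim (fun x => exp (- (x * x))) p_infty 0.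
Proof.
  apply (is_lim_comp exp (fun x => - (x * x)) p_infty 0 m_infty).
  - apply is_lim_exp_m.
  - change m_infty with (Rbar_opp (Rbar_mult p_infty p_infty)).
    apply is_lim_opp, is_lim_mult; try apply is_lim_id; simpl; auto.
  - exists 0; intros; discriminate.
Qed.

Lemma is_lim_gauss_int : is_lim gauss_int p_infty (sqrt PI / 2).
Proof.
  assert (Hsqr : is_lim (fun x => gauss_int x * gauss_int x) p_infty (PI / 4)).
  { apply (is_lim_ext (fun x => PI / 4 - RInt (gauss_kernel x) 0 1)).
    { intros x; generalize (RInt_gauss_kernel_const x); lra. }
    eapply is_lim_minus; [apply is_lim_const| |].
    - apply (is_lim_le_le_loc (fun _ => 0) (fun x => exp (- (x * x)))).
      + exists 0; intros; apply RInt_gauss_kernel_bounds.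
      + apply is_lim_const.
      + apply is_lim_exp_neg_sqr.
    - simpl; unfold is_Rbar_minus, is_Rbar_plus; simpl; do 2 f_equal; ring. }
  apply (is_lim_ext_loc (fun x => sqrt (gauss_int x * gauss_int x))).
  - exists 0; intros x Hx; apply sqrt_square, gauss_int_nonneg; lra.
  - replace (sqrt PI / 2) with (sqrt (PI / 4)).
    + apply (is_lim_comp_continuous _ sqrt p_infty (PI / 4)); auto.
      apply continuous_sqrt.
    + rewrite sqrt_div_alt by lra.
      replace 4 with (2 * 2) by ring; rewrite sqrt_square; lra.
Qed.

(** * The standard normal distribution *)

Lemma sqrt_2_PI_pos : 0 < sqrt (2 * PI).
Proof. apply sqrt_lt_R0; generalize PI_RGT_0; lra. Qed.

Lemma std_normal_pdf_pos x : 0 < std_normal_pdf x.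
Proof. apply Rdiv_lt_0_compat; [apply exp_pos | apply sqrt_2_PI_pos]. Qed.

Lemma is_derive_std_normal_pdf x : is_derive std_normal_pdf x (- x * std_normal_pdf x).
Proof.
  generalize sqrt_2_PI_pos; intros Hq.
  unfold std_normal_pdf; auto_derive; [lra|].
  change_to_R; replace (- (x * (x * 1)) * / 2) with (- x ^ 2 / 2) by field; field; lra.
Qed.

Lemma Derive_std_normal_pdf x : Derive std_normal_pdf x = - x * std_normal_pdf x.
Proof. apply is_derive_unique, is_derive_std_normal_pdf. Qed.

Lemma ex_derive_std_normal_pdf x : ex_derive std_normal_pdf x.
Proof. eexists; apply is_derive_std_normal_pdf. Qed.

Lemma std_normal_pdf_le_1 x : std_normal_pdf x <= 1.
Proof.
  assert (He : exp (- x ^ 2 / 2) <= 1).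
  { rewrite <- exp_0; apply exp_le_compat.
    generalize (pow2_ge_0 x); lra. }
  assert (Hq : 1 <= sqrt (2 * PI)).
  { rewrite <- sqrt_1; apply sqrt_le_1_alt; generalize PI2_3_2; lra. }
  unfold std_normal_pdf, Rdiv.
  rewrite <- (Rmult_1_r 1); apply Rmult_le_compat; try lra.
  - left; apply exp_pos.
  - left; apply Rinv_0_lt_compat; lra.
  - rewrite <- Rinv_1; apply Rinv_le_contravar; lra.
Qed.

Definition normal_cdf0 (x : R) : R := gauss_int (x / sqrt 2) / sqrt PI.

Lemma is_derive_normal_cdf0 x : is_derive normal_cdf0 x (std_normal_pdf x).
Proof.
  assert (H2 : 0 < sqrt 2) by (apply sqrt_lt_R0; lra).
  assert (HP : 0 < sqrt PI) by apply sqrt_lt_R0, PI_RGT_0.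
  unfold normal_cdf0.
  apply (is_derive_ext (fun y => scal (gauss_int (y / sqrt 2)) (/ sqrt PI)));
    [reflexivity|].
  replace (std_normal_pdf x) with (scal (scal (/ sqrt 2) (gauss (x / sqrt 2))) (/ sqrt PI)).
  - apply (is_derive_scal_l _ x _ (/ sqrt PI)).
    apply (is_derive_comp gauss_int (fun y => y / sqrt 2)).
    + apply is_derive_gauss_int.
    + auto_derive; auto; change_to_R; field; lra.
  - unfold std_normal_pdf, gauss, scal; simpl; unfold mult; simpl.
    rewrite sqrt_mult by (generalize PI_RGT_0; lra).
    replace (x / sqrt 2 * (x / sqrt 2)) with (x ^ 2 / (sqrt 2 * sqrt 2)) by (field; lra).
    rewrite sqrt_sqrt by lra.
    change_to_R; replace (- (x * (x * 1)) / 2) with (- (x ^ 2 / 2)) by field; field; lra.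
Qed.

Lemma Derive_normal_cdf0 x : Derive normal_cdf0 x = std_normal_pdf x.
Proof. apply is_derive_unique, is_derive_normal_cdf0. Qed.

Lemma ex_derive_normal_cdf0 x : ex_derive normal_cdf0 x.
Proof. eexists; apply is_derive_normal_cdf0. Qed.

Lemma is_lim_normal_cdf0 : is_lim normal_cdf0 p_infty (1 / 2).
Proof.
  assert (H2 : 0 < / sqrt 2) by (apply Rinv_0_lt_compat, sqrt_lt_R0; lra).
  assert (HP : 0 < sqrt PI) by apply sqrt_lt_R0, PI_RGT_0.
  apply (is_lim_ext (fun y => gauss_int (/ sqrt 2 * y + 0) * / sqrt PI)).
  { intros y; unfold normal_cdf0, Rdiv; rewrite Rplus_0_r, (Rmult_comm (/ sqrt 2)); reflexivity. }
  replace (Finite (1 / 2)) with (Rbar_mult (sqrt PI / 2) (/ sqrt PI))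
    by (simpl; f_equal; field; lra).
  apply is_lim_scal_r, (is_lim_comp_lin gauss_int); [|lra].
  replace (Rbar_plus (Rbar_mult (/ sqrt 2) p_infty) 0) with p_infty.
  - apply is_lim_gauss_int.
  - rewrite (is_Rbar_mult_unique _ _ p_infty); auto.
    apply is_Rbar_mult_sym, is_Rbar_mult_p_infty_pos; auto.
Qed.

Lemma Phi_normal_cdf0 s : Phi s = 1 / 2 - normal_cdf0 s.
Proof.
  apply is_RInt_gen_unique, (is_RInt_gen_ext (Derive normal_cdf0)).
  - apply filter_forall; intros; apply Derive_normal_cdf0.
  - apply is_RInt_gen_Derive.
    + apply filter_forall; intros; apply ex_derive_normal_cdf0.
    + apply filter_forall; intros; apply (continuous_ext std_normal_pdf).
      * intros; symmetry; apply Derive_normal_cdf0.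
      * apply continuous_of_ex_derive, ex_derive_std_normal_pdf.
    + intros P HP; apply (locally_singleton _ _ HP).
    + apply is_lim_normal_cdf0.
Qed.

Lemma is_lim_normal_cdf0_sub s :
  is_lim (fun b => normal_cdf0 b - normal_cdf0 s) p_infty (Phi s).
Proof.
  rewrite Phi_normal_cdf0.
  eapply is_lim_minus; [apply is_lim_normal_cdf0 | apply is_lim_const | reflexivity].
Qed.

(** * Power series of the normal distribution function *)

Definition exp_half_coef (k : nat) : R := (-1) ^ k / (2 ^ k * INR (fact k)).

Definition gauss_half_coef (k : nat) : R := exp_half_coef k / (2 * INR k + 1).

Definition gauss_half_prim (s : R) : R := s * PSeries gauss_half_coef (s * s).

Lemma exp_half_coef_denom_pos k : 0 < 2 ^ k * INR (fact k).
Proof. apply Rmult_lt_0_compat; [apply pow_lt; lra | apply lt_0_INR, lt_O_fact]. Qed.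

Lemma is_pseries_exp_half y : is_pseries exp_half_coef y (exp (- y / 2)).
Proof.
  pose proof (proj1 (is_pseries_R _ _ _) (is_exp_Reals (- y / 2))) as Hexp.
  apply is_pseries_R; revert Hexp; apply is_series_ext; intros n.
  generalize (exp_half_coef_denom_pos n); intros Hd.
  unfold exp_half_coef; replace (- y / 2) with (-1 * y * / 2) by field.
  rewrite !Rpow_mult_distr, pow_inv.
  change_to_R; field; split; [apply INR_fact_neq_0 | apply pow_nonzero; lra].
Qed.

Lemma CV_radius_p_infty (a : nat -> R) : (forall x, CV_disk a x) -> CV_radius a = p_infty.
Proof.
  intros Ha; unfold CV_radius.
  destruct (Lub_Rbar_correct (CV_disk a)) as [Hub _].
  destruct (Lub_Rbar (CV_disk a)) as [r| |]; auto; exfalso.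
  - specialize (Hub (r + 1) (Ha _)); simpl in Hub; lra.
  - exact (Hub 0 (Ha _)).
Qed.

Lemma Rabs_gauss_half_coef_le k : Rabs (gauss_half_coef k) <= / INR (fact k).
Proof.
  generalize (lt_0_INR _ (lt_O_fact k)) (pos_INR k) (pow_R1_Rle 2 k ltac:(lra)).
  intros Hf Hk Hp.
  assert (Hd : 0 < 2 ^ k * INR (fact k) * (2 * INR k + 1))
    by (repeat apply Rmult_lt_0_compat; lra).
  replace (gauss_half_coef k) with ((-1) ^ k * / (2 ^ k * INR (fact k) * (2 * INR k + 1)))
    by (unfold gauss_half_coef, exp_half_coef; field; nra).
  rewrite Rabs_mult, pow_1_abs, Rmult_1_l, Rabs_inv, Rabs_pos_eq by lra.
  apply Rinv_le_contravar; [assumption|].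
  rewrite <- (Rmult_1_l (INR (fact k))) at 1.
  rewrite Rmult_assoc; apply Rmult_le_compat; nra.
Qed.

Lemma CV_radius_gauss_half_coef : CV_radius gauss_half_coef = p_infty.
Proof.
  apply CV_radius_p_infty; intros x.
  apply (ex_series_le (K := R_AbsRing) (V := R_CompleteNormedModule) _
           (fun n => / INR (fact n) * Rabs x ^ n)).
  - intros n; unfold norm; simpl.
    rewrite Rabs_Rabsolu, Rabs_mult, <- RPow_abs.
    apply Rmult_le_compat_r; [apply pow_le, Rabs_pos | apply Rabs_gauss_half_coef_le].
  - eexists; apply (proj1 (is_pseries_R _ _ _) (is_exp_Reals (Rabs x))).
Qed.

Lemma is_pseries_gauss_half_coef y :
  is_pseries gauss_half_coef y (PSeries gauss_half_coef y).
Proof.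
  apply PSeries_correct, CV_radius_inside.
  rewrite CV_radius_gauss_half_coef; exact I.
Qed.

(* Termwise, [(2 k + 1) b_k = e_k] for [b = gauss_half_coef], [e = exp_half_coef]. *)
Lemma gauss_half_pseries_ode y :
  PSeries gauss_half_coef y + 2 * (y * PSeries (PS_derive gauss_half_coef) y)
  = exp (- y / 2).
Proof.
  assert (Hd : is_pseries (PS_derive gauss_half_coef) y
                 (PSeries (PS_derive gauss_half_coef) y)).
  { apply PSeries_correct, CV_radius_inside.
    rewrite CV_radius_derive, CV_radius_gauss_half_coef; exact I. }
  apply is_pseries_incr_1 in Hd.
  apply (is_pseries_scal (V := R_NormedModule) 2) in Hd; [|unfold mult; simpl; ring].
  pose proof (is_pseries_plus _ _ _ _ _ (is_pseries_gauss_half_coef y) Hd) as Hsum.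
  rewrite <- (is_pseries_unique _ _ _ (is_pseries_exp_half y)).
  rewrite <- (is_pseries_unique _ _ _ Hsum) at 1.
  apply PSeries_ext; intros [|m];
    unfold PS_plus, PS_scal, PS_incr_1, PS_derive, gauss_half_coef;
    unfold plus, scal, zero; simpl; unfold mult; simpl.
  - change_to_R; field.
  - change (match m with 0%nat => 1 | S _ => INR m + 1 end) with (INR (S m)).
    rewrite S_INR; change_to_R; field; generalize (pos_INR m); lra.
Qed.

Lemma is_derive_gauss_half_prim s : is_derive gauss_half_prim s (exp (- (s * s) / 2)).
Proof.
  set (Q' := PSeries (PS_derive gauss_half_coef) (s * s)).
  assert (HQ : is_derive (fun s => PSeries gauss_half_coef (s * s)) s (scal (2 * s) Q')).
  { apply (is_derive_comp (PSeries gauss_half_coef) (fun s => s * s)).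
    - apply is_derive_PSeries; rewrite CV_radius_gauss_half_coef; exact I.
    - auto_derive; auto; ring. }
  pose proof (is_derive_mult (fun s => s) _ s _ _ (is_derive_id s) HQ Rmult_comm) as Hprod.
  rewrite <- gauss_half_pseries_ode; fold Q'.
  replace (_ + _)
    with (plus (mult one (PSeries gauss_half_coef (s * s))) (mult s (scal (2 * s) Q')))
    by (unfold plus, mult, one, scal; simpl; unfold mult; simpl; change_to_R; ring).
  exact Hprod.
Qed.

Lemma normal_cdf0_gauss_half_prim s : normal_cdf0 s = gauss_half_prim s / sqrt (2 * PI).
Proof.
  revert s; apply (eq_of_is_derive_eq _ _ std_normal_pdf).
  - apply is_derive_normal_cdf0.
  - intros x; replace (std_normal_pdf x) with (exp (- (x * x) / 2) / sqrt (2 * PI))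
      by (unfold std_normal_pdf; do 3 f_equal; ring).
    exact (is_derive_scal_l _ x _ (/ sqrt (2 * PI)) (is_derive_gauss_half_prim x)).
  - unfold normal_cdf0, gauss_half_prim, gauss_int; unfold Rdiv.
    rewrite Rmult_0_l, RInt_point; change_to_R; unfold zero; simpl; ring.
Qed.

Lemma sqrt_2_div_PI_eq : sqrt (2 / PI) = 2 / sqrt (2 * PI).
Proof.
  generalize PI_RGT_0; intros HP.
  replace (2 / PI) with ((2 * 2) / (2 * PI)) by (field; lra).
  rewrite sqrt_div_alt, sqrt_square by lra; reflexivity.
Qed.

Lemma p1_closed_form c : 0 < c ->
  p1 c = sqrt (2 / PI) * (gauss_half_prim (/ c) + c * (exp (- (/ c * / c) / 2) - 1)).
Proof.
  intros Hc; generalize sqrt_2_PI_pos; intros Hq.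
  unfold p1; rewrite Phi_normal_cdf0, normal_cdf0_gauss_half_prim, sqrt_2_div_PI_eq.
  replace (/ c ^ 2) with (/ c * / c) by (field; lra).
  field; lra.
Qed.

Lemma p1_term_coef k : gauss_half_coef k + exp_half_coef (S k) =
  (-1) ^ k / (2 ^ k * INR (fact k) * (2 * INR k + 2) * (2 * INR k + 1)).
Proof.
  generalize (exp_half_coef_denom_pos k) (pos_INR k); intros Hd Hk.
  unfold gauss_half_coef, exp_half_coef.
  rewrite fact_simpl, mult_INR, S_INR; simpl pow.
  field; repeat split; nra.
Qed.

Lemma is_series_p1 c : 0 < c -> is_series (p1_term c) (p1 c).
Proof.
  intros Hc; rewrite p1_closed_form by exact Hc.
  set (y := / c * / c).
  assert (Hprim : is_series (fun k => / c * (gauss_half_coef k * y ^ k)) (gauss_half_prim (/ c))).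
  { apply (is_series_scal (/ c) (fun k => gauss_half_coef k * y ^ k)).
    apply is_pseries_R, is_pseries_gauss_half_coef. }
  assert (Hexp : is_series (fun k => c * (exp_half_coef (S k) * y ^ S k))
                   (c * (exp (- y / 2) - 1))).
  { apply (is_series_scal c (fun k => exp_half_coef (S k) * y ^ S k)).
    apply (is_series_incr_1 (fun k => exp_half_coef k * y ^ k)).
    replace (plus _ _) with (exp (- y / 2))
      by (unfold exp_half_coef, plus; simpl; change_to_R; field).
    apply is_pseries_R, is_pseries_exp_half. }
  eapply is_series_ext;
    [|exact (is_series_scal (sqrt (2 / PI)) _ _ (is_series_plus _ _ _ _ Hprim Hexp))].
  intros k.
  assert (Hpow : / c ^ (2 * k + 1) = / c * y ^ k).
  { unfold y; rewrite <- pow_inv, pow_add, pow_mult; change_to_R.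
    replace ((/ c) ^ 2) with (/ c * / c) by ring; ring. }
  unfold p1_term; rewrite <- p1_term_coef, Hpow.
  unfold scal, plus; simpl; unfold mult; simpl; change_to_R.
  unfold y; field; lra.
Qed.

(** * Mills-ratio bounds on the normal tail *)

Lemma Phi_le_std_normal_pdf_div s : 0 < s -> Phi s <= std_normal_pdf s / s.
Proof.
  intros Hs.
  set (K := fun x => - std_normal_pdf x / s - normal_cdf0 x).
  assert (HK : forall b, s <= b -> K s <= K b).
  { intros b Hb; apply (le_of_is_derive_nonneg K (fun x => std_normal_pdf x * (x - s) / s));
      [lra| |].
    - intros x _; unfold K; auto_derive.
      + split; [apply ex_derive_std_normal_pdf | split; [apply ex_derive_normal_cdf0 | exact I]].
      + rewrite Derive_std_normal_pdf, Derive_normal_cdf0; field; lra.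
    - intros x Hx; generalize (std_normal_pdf_pos x); intros Hp.
      apply Rmult_le_pos; [nra | left; apply Rinv_0_lt_compat; lra]. }
  change (Rbar_le (Phi s) (std_normal_pdf s / s)).
  apply (is_lim_le_loc (fun b => normal_cdf0 b - normal_cdf0 s) (fun _ => std_normal_pdf s / s)
           p_infty); [| apply is_lim_normal_cdf0_sub | apply is_lim_const].
  exists s; intros b Hb.
  specialize (HK b ltac:(lra)); unfold K in HK.
  generalize (std_normal_pdf_pos b); intros Hp.
  assert (0 < std_normal_pdf b / s) by (apply Rdiv_lt_0_compat; lra).
  unfold Rdiv in *; lra.
Qed.

Lemma std_normal_pdf_mul_le_Phi s : 0 < s -> std_normal_pdf s * (/ s - / s ^ 3) <= Phi s.
Proof.
  intros Hs.
  set (L := fun x => std_normal_pdf x * (/ x - / x ^ 3)).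
  set (K := fun x => normal_cdf0 x + L x).
  assert (HK : forall b, s <= b -> K s <= K b).
  { intros b Hb; apply (le_of_is_derive_nonneg K (fun x => 3 * std_normal_pdf x / x ^ 4));
      [lra| |].
    - intros x Hx; assert (Hx3 : 0 < x ^ 3) by (apply pow_lt; lra).
      unfold K, L; auto_derive.
      + simpl in Hx3; repeat split;
          try apply ex_derive_std_normal_pdf; try apply ex_derive_normal_cdf0; lra.
      + rewrite Derive_std_normal_pdf, Derive_normal_cdf0; field; lra.
    - intros x Hx; generalize (std_normal_pdf_pos x) (pow_lt x 4 ltac:(lra)); intros Hp Hx4.
      apply Rdiv_le_0_compat; lra. }
  change (Rbar_le (L s) (Phi s)).
  apply (is_lim_le_loc (fun b => L s - / b) (fun b => normal_cdf0 b - normal_cdf0 s) p_infty);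
    [| | apply is_lim_normal_cdf0_sub].
  - exists (Rmax s 1); intros b Hb.
    generalize (Rmax_l s 1) (Rmax_r s 1); intros Hs1 H11.
    specialize (HK b ltac:(lra)); unfold K in HK.
    assert (HLb : L b <= / b).
    { unfold L; generalize (std_normal_pdf_pos b) (std_normal_pdf_le_1 b); intros Hp Hp1.
      assert (Hb3 : 0 < / b ^ 3) by (apply Rinv_0_lt_compat, pow_lt; lra).
      assert (Hb1 : 0 < / b) by (apply Rinv_0_lt_compat; lra).
      assert (/ b ^ 3 <= / b) by (apply Rinv_le_contravar; [lra | simpl; nra]).
      nra. }
    lra.
  - apply (is_lim_minus (fun _ => L s) Rinv p_infty (L s) 0); [apply is_lim_const | |].
    + apply (is_lim_inv (fun y => y) p_infty p_infty); [apply is_lim_id | discriminate].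
    + unfold is_Rbar_minus, is_Rbar_plus; simpl; do 2 f_equal; ring.
Qed.

(** * Bounds on [p1] *)

Lemma one_le_one_sub_mul_exp_taylor3 d y : 0 < d -> d <= 1 / 2 -> 0 < y -> y <= 41 / 50 * d ->
  let x := (1 + d) * y in 1 <= (1 - y) * (1 + x + x ^ 2 / 2 + x ^ 3 / 6).
Proof.
  intros Hd0 Hd1 Hy0 Hy1 x; unfold x.
  set (k := 1 + d).
  assert (Hk : 1 <= k <= 3 / 2) by (unfold k; lra).
  replace ((1 - y) * (1 + k * y + (k * y) ^ 2 / 2 + (k * y) ^ 3 / 6))
    with (1 + y * (d + y * (k * k / 2 - k) + y * y * (k * k * (k - 3) / 6)
                   - k * k * k * y * y * y / 6)) by (unfold k; field).
  assert (Hk2 : k * k / 2 - k >= - 1 / 2) by nra.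
  assert (Hkk : k * k <= 9 / 4) by nra.
  assert (Hk3 : k * k * (k - 3) / 6 >= - 9 / 16)
    by (assert (k * k * (3 - k) <= 9 / 4 * 2) by nra; nra).
  assert (Hk4 : k * k * k <= 27 / 8) by nra.
  assert (Hyy : y * y <= 41 / 100 * y) by nra.
  assert (Hyyy : y * y * y <= 41 / 100 * (y * y)) by nra.
  assert (0 <= d + y * (k * k / 2 - k) + y * y * (k * k * (k - 3) / 6)
               - k * k * k * y * y * y / 6).
  { assert (y * (k * k / 2 - k) >= - 1 / 2 * y) by nra.
    assert (y * y * (k * k * (k - 3) / 6) >= - 9 / 16 * (y * y)) by nra.
    assert (0 <= y * y * y) by (apply Rmult_le_pos; nra).
    assert (k * k * k * (y * y * y) <= 27 / 8 * (y * y * y)) by nra.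
    nra. }
  nra.
Qed.

(* The cubic Taylor polynomial of [exp] suffices because [y <= 41/50 d]; the
   constant [41/50] only has to exceed [sqrt (2 / PI) ~ 0.798]. *)
Lemma exp_neg_le_one_sub d y : 0 < d -> d <= 1 / 2 -> 0 < y -> y <= 41 / 50 * d ->
  exp (- ((1 + d) * y)) <= 1 - y.
Proof.
  intros Hd0 Hd1 Hy0 Hy1.
  set (x := (1 + d) * y).
  assert (Hx : 0 <= x) by (unfold x; nra).
  pose proof (exp_ge_taylor x 3 Hx) as Htaylor; simpl in Htaylor.
  pose proof (one_le_one_sub_mul_exp_taylor3 d y Hd0 Hd1 Hy0 Hy1) as Hpoly; fold x in Hpoly.
  assert (Hexp : 1 <= (1 - y) * exp x).
  { eapply Rle_trans; [exact Hpoly|].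
    apply Rmult_le_compat_l; [lra|].
    replace (1 + x + x ^ 2 / 2 + x ^ 3 / 6) with
      (1 / 1 + x / 1 + x * x / (1 + 1) + x * (x * x) / (1 + 1 + 1 + 1 + 1 + 1))
      by (simpl; field).
    lra. }
  rewrite exp_Ropp.
  pose proof (exp_pos x).
  apply (Rmult_le_reg_r (exp x)); [assumption|].
  rewrite Rinv_l; lra.
Qed.

Lemma sqrt_2_div_PI_bounds : 0 < sqrt (2 / PI) <= 41 / 50.
Proof.
  generalize PI_RGT_0 PI2_3_2; intros HP HP3.
  assert (H2P : 0 < 2 / PI) by (apply Rdiv_lt_0_compat; lra).
  split; [apply sqrt_lt_R0; lra|].
  rewrite <- (sqrt_square (41 / 50)) by lra.
  apply sqrt_le_1_alt.
  apply (Rmult_le_reg_r PI); [lra|].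
  unfold Rdiv; rewrite Rmult_assoc, Rinv_l; lra.
Qed.

Lemma exp_neg_inv_sqr_le d c : 0 < d < 1 -> 0 < c ->
  c <= 1 / sqrt (2 * ln (1 / d)) -> exp (- (/ c ^ 2) / 2) <= d.
Proof.
  intros Hd Hc Hcl.
  assert (HL : 0 < ln (1 / d))
    by (rewrite <- ln_1; apply ln_increasing; [lra | apply Rlt_div_r; lra]).
  assert (Hsq : 0 < sqrt (2 * ln (1 / d))) by (apply sqrt_lt_R0; lra).
  assert (Hc1 : c * sqrt (2 * ln (1 / d)) <= 1).
  { unfold Rdiv in Hcl; rewrite Rmult_1_l in Hcl.
    apply (Rmult_le_compat_r (sqrt (2 * ln (1 / d)))) in Hcl; [|lra].
    rewrite Rinv_l in Hcl; lra. }
  assert (Hc2 : c ^ 2 * (2 * ln (1 / d)) <= 1).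
  { rewrite <- (sqrt_sqrt (2 * ln (1 / d))) by lra.
    replace (c ^ 2 * (sqrt (2 * ln (1 / d)) * sqrt (2 * ln (1 / d))))
      with ((c * sqrt (2 * ln (1 / d))) ^ 2) by ring.
    assert (0 <= c * sqrt (2 * ln (1 / d))) by (apply Rmult_le_pos; lra).
    simpl; nra. }
  assert (Hc3 : ln (1 / d) <= / c ^ 2 / 2).
  { assert (0 < c ^ 2) by (apply pow_lt; lra).
    apply (Rmult_le_reg_r (2 * c ^ 2)); [lra|].
    replace (/ c ^ 2 / 2 * (2 * c ^ 2)) with 1 by (field; lra); lra. }
  rewrite <- (exp_ln d) by lra.
  apply exp_le_compat.
  rewrite ln_div, ln_1 in Hc3 by lra; lra.
Qed.

Lemma two_std_normal_pdf_inv c :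
  2 * std_normal_pdf (/ c) = sqrt (2 / PI) * exp (- (/ c ^ 2) / 2).
Proof.
  generalize sqrt_2_PI_pos; intros Hq.
  unfold std_normal_pdf; rewrite sqrt_2_div_PI_eq, pow_inv; field; lra.
Qed.

Lemma one_sub_le_p1 c : 0 < c -> 1 - sqrt (2 / PI) * c <= p1 c.
Proof.
  intros Hc.
  pose proof (Phi_le_std_normal_pdf_div (/ c) ltac:(apply Rinv_0_lt_compat; lra)) as Hmills.
  pose proof (two_std_normal_pdf_inv c) as Hpdf.
  pose proof (exp_pos (- (/ c ^ 2) / 2)).
  pose proof sqrt_2_div_PI_bounds.
  unfold Rdiv in Hmills; rewrite Rinv_inv in Hmills.
  unfold p1; nra.
Qed.

Lemma p1_le_one_sub_add_cube c : 0 < c ->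
  p1 c <= 1 - sqrt (2 / PI) * c + sqrt (2 / PI) * exp (- (/ c ^ 2) / 2) * c ^ 3.
Proof.
  intros Hc.
  pose proof (std_normal_pdf_mul_le_Phi (/ c) ltac:(apply Rinv_0_lt_compat; lra)) as Hmills.
  pose proof (two_std_normal_pdf_inv c) as Hpdf.
  rewrite pow_inv, !Rinv_inv in Hmills.
  unfold p1; nra.
Qed.

Theorem lemma6 :
  (forall c : R, 0 < c -> is_series (p1_term c) (p1 c)) /\
  (forall delta c : R, 0 < delta -> delta <= 1 / 2 -> 0 < c ->
     c <= Rmin delta (1 / sqrt (2 * ln (1 / delta))) ->
     exp (- sqrt (2 / PI) * (1 + delta) * c) <= p1 c /\
     p1 c <= exp (- sqrt (2 / PI) * (1 - delta ^ 3) * c)).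
Proof.
  split; [exact is_series_p1|].
  intros delta c Hd0 Hd1 Hc Hmin.
  pose proof (Rle_trans _ _ _ Hmin (Rmin_l _ _)) as Hcd.
  pose proof (exp_neg_inv_sqr_le delta c ltac:(lra) Hc (Rle_trans _ _ _ Hmin (Rmin_r _ _))) as HE.
  pose proof (exp_pos (- (/ c ^ 2) / 2)) as HE0.
  destruct sqrt_2_div_PI_bounds as [Ha0 Ha1].
  split.
  - replace (- sqrt (2 / PI) * (1 + delta) * c) with (- ((1 + delta) * (sqrt (2 / PI) * c)))
      by ring.
    eapply Rle_trans; [apply exp_neg_le_one_sub; nra | apply one_sub_le_p1; lra].
  - eapply Rle_trans; [apply p1_le_one_sub_add_cube; lra | eapply Rle_trans; [|apply exp_ineq1_le]].
    assert (exp (- (/ c ^ 2) / 2) * c ^ 2 <= delta ^ 3)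
      by (replace (delta ^ 3) with (delta * delta ^ 2) by ring;
          apply Rmult_le_compat; try apply pow_incr; nra).
    assert (sqrt (2 / PI) * c * (exp (- (/ c ^ 2) / 2) * c ^ 2) <= sqrt (2 / PI) * c * delta ^ 3)
      by (apply Rmult_le_compat_l; nra).
    lra.
Qed.
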